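(* Let $\mathsf p,\mathsf q$ be self-adjoint on $L^2(\mathbb R)$ with $\mathsf p\mathsf q-\mathsf q\mathsf p=(2\pi\mathsf i)^{-1}$, realized by $\langle x|\mathsf q=x\langle x|$, $\langle x|\mathsf p=\frac{1}{2\pi\mathsf i}\partial_x\langle x|$, and for $s\ge0$ let $|\alpha_s\rangle$ be given by $\langle x|\alpha_s\rangle=\frac{\varphi_b(s-x-c_b+\mathsf i0)}{\varphi_b(s+x+c_b-\mathsf i0)}e^{-2\pi\mathsf i(x+c_b)s}$. Then \[ \bigl(e^{2\pi b\mathsf p}+2\cosh(2\pi b\mathsf q)\bigr)|\alpha_s\rangle=2\cosh(2\pi bs)\,|\alpha_s\rangle . \]
   Context: $b\in\mathbb C$ with $\operatorname{Re}b>0$, $\operatorname{Im}b\ge0$, $c_b=\mathsf i(b+b^{-1})/2$. $\varphi_b$ is the non-compact quantum dilogarithm: $\varphi_b(z)=\exp(-\frac14\int_{\mathbb R}\frac{e^{-2\mathsf izx}dx}{\sinh(xb)\sinh(x/b)x})$ for $|\operatorname{Im}z|<\operatorname{Im}c_b$ (contour above $x=0$), extended meromorphically by $\varphi_b(z+\mathsf ib^{\pm1}/2)=(1+e^{2\pi zb^{\pm1}})\varphi_b(z-\mathsf ib^{\pm1}/2)$. *)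

From Stdlib Require Import Reals.
From Coquelicot Require Export Coquelicot.
Open Scope R_scope.

Definition cexp (z : C) : C := (exp (Re z) * cos (Im z), exp (Re z) * sin (Im z)).
Definition csinh (z : C) : C := ((cexp z - cexp (- z)) / 2)%C.
Definition ccosh (z : C) : C := ((cexp z + cexp (- z)) / 2)%C.

Definition c_b (b : C) : C := (Ci * (b + / b) / 2)%C.

(* height of the horizontal integration contour R + i*eps_b, which lies
   strictly between x = 0 and the nearest poles of 1/(sinh(xb) sinh(x/b))
   in the upper half plane (at i*pi/b and i*pi*b), i.e. "above x = 0". *)
Definition eps_b (b : C) : R := PI / 2 * Rmin (Re b) (Re (/ b)).

Definition phib_integrand (b z : C) (t : R) : C :=
  let x : C := (RtoC t + Ci * RtoC (eps_b b))%C in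
  (cexp (- (2 * Ci * z * x)) / (csinh (x * b) * csinh (x / b) * x))%C.

(* integral representation, valid for |Im z| < Im c_b *)
Definition phib_strip (b z : C) : C :=
  cexp (- (/ 4) * @RInt_gen C_R_CompleteNormedModule (phib_integrand b z)
                     (Rbar_locally m_infty) (Rbar_locally p_infty))%C.

(* meromorphic extension of phi_b to all of C via the functional equation
     phi_b(w + i b) = (1 + e^{2 pi b (w + i b / 2)}) phi_b(w).
   For arbitrary z choose the integer n with
     -Im c_b < Im (z + i n b) <= -Im c_b + Re b
   (this window lies inside the strip |Im w| < Im c_b) and transport. *)
Definition shift_index (b z : C) : Z :=
  Int_part (1 + (- Im (c_b b) - Im z) / Re b).

Definition fe_factor (b w : C) : C :=
  (1 + cexp (2 * RtoC PI * b * (w + Ci * b / 2)))%C.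

Fixpoint fe_prod (b z : C) (m : nat) : C :=
  match m with
  | O => 1%C
  | S m' => (fe_prod b z m' * fe_factor b (z + Ci * RtoC (INR m') * b))%C
  end.

Definition phib (b z : C) : C :=
  let n := shift_index b z in
  if Z.leb 0 n then
    (* phi(z + i n b) = fe_prod b z n * phi(z) *)
    (phib_strip b (z + Ci * IZR n * b) / fe_prod b z (Z.to_nat n))%C
  else
    (* phi(z) = fe_prod b (z + i n b) |n| * phi(z + i n b) *)
    (fe_prod b (z + Ci * IZR n * b) (Z.to_nat (- n)) * phib_strip b (z + Ci * IZR n * b))%C.

(* the eigenfunction <x|alpha_s>, as an analytic function of x in the lower
   half plane; on the real line its boundary value x - i0 is taken *)
Definition alpha (b : C) (s : R) (x : C) : C :=
  (phib b (RtoC s - x - c_b b) / phib b (RtoC s + x + c_b b)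
   * cexp (- (2 * RtoC PI * Ci * (x + c_b b) * RtoC s)))%C.

(* The Weyl pair acts by shifts: e^{2 pi b p} moves the argument by -ib, and
   phi_b(w + ib) = (1 + e^{2 pi b (w + ib/2)}) phi_b(w) is built into the
   meromorphic continuation.  Applied to numerator and denominator of
   <x|alpha_s>, it gives
     alpha_s(z - ib) = (1 - P/Q) (1 - P Q) P^{-1} alpha_s(z),
   P = e^{2 pi b s}, Q = e^{2 pi b z}, and
     (1 - P/Q) (1 - P Q) P^{-1} + Q + Q^{-1} = P + P^{-1}.
   The only analytic input is that the denominator factor 1 - P Q does not
   vanish where the continuation of phi_b uses its negative branch. *)
From Stdlib Require Import Reals Lra Lia ZArith.
From Coquelicot Require Import Coquelicot.
Open Scope R_scope.

Lemma Cinv0 : Cinv 0 = 0%C.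
Proof. unfold Cinv; apply injective_projections; simpl; unfold Rdiv; ring. Qed.

Lemma Cinv_mult (a c : C) : Cinv (a * c) = (Cinv a * Cinv c)%C.
Proof.
  destruct (Ceq_dec a 0) as [->|Ha]; [rewrite Cmult_0_l, Cinv0; ring|].
  destruct (Ceq_dec c 0) as [->|Hc]; [rewrite Cmult_0_r, Cinv0; ring|].
  field; auto.
Qed.

Lemma Cinv_inv (a : C) : Cinv (Cinv a) = a.
Proof.
  destruct (Ceq_dec a 0) as [->|Ha]; [rewrite !Cinv0; reflexivity|].
  assert (Hia : Cinv a <> 0%C).
  { intro E. apply Ha. rewrite <- (Cmult_1_r a), <- (Cinv_r a Ha), E. ring. }
  field; auto.
Qed.

Lemma neq_0_of_Re_pos (b : C) : 0 < Re b -> b <> 0%C.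
Proof. intros Hb E. rewrite E in Hb. simpl in Hb. lra. Qed.

Lemma Re_Cinv_pos (b : C) : 0 < Re b -> 0 < Re (/ b).
Proof.
  destruct b as [b1 b2]; simpl; intro Hb.
  apply Rdiv_lt_0_compat; nra.
Qed.

Lemma Im_c_b (b : C) : Im (c_b b) = (Re b + Re (/ b)) / 2.
Proof.
  destruct b as [b1 b2]; unfold c_b; simpl.
  destruct (Req_dec (b1 * b1 + b2 * b2) 0) as [E|E].
  - assert (b1 = 0) by nra. assert (b2 = 0) by nra. subst. unfold Rdiv. ring.
  - field. exact E.
Qed.

Lemma Ci_mult_Ci : (Ci * Ci = -1)%C.
Proof. apply injective_projections; simpl; ring. Qed.

Lemma cexp_add (a c : C) : cexp (a + c) = (cexp a * cexp c)%C.
Proof.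
  destruct a as [a1 a2], c as [c1 c2]; unfold cexp; simpl.
  rewrite exp_plus, cos_plus, sin_plus.
  apply injective_projections; simpl; ring.
Qed.

Lemma cexp_opp_r (a : C) : (cexp a * cexp (- a) = 1)%C.
Proof.
  rewrite <- cexp_add. replace (a + - a)%C with (RtoC 0) by ring.
  unfold cexp; simpl. rewrite exp_0, cos_0, sin_0.
  apply injective_projections; simpl; ring.
Qed.

Lemma cexp_iPI : cexp (Ci * RtoC PI) = (-1)%C.
Proof.
  unfold cexp; simpl.
  replace (0 * PI - 1 * 0) with 0 by ring. replace (0 * 0 + 1 * PI) with PI by ring.
  rewrite exp_0, cos_PI, sin_PI.
  apply injective_projections; simpl; ring.
Qed.

Lemma cexp_add_iPI (w : C) : cexp (w + Ci * RtoC PI) = (- cexp w)%C.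
Proof. rewrite cexp_add, cexp_iPI. ring. Qed.

Lemma cexp_sub_iPI (w : C) : cexp (w - Ci * RtoC PI) = (- cexp w)%C.
Proof.
  replace (cexp w) with (cexp (w - Ci * RtoC PI + Ci * RtoC PI)) by (f_equal; ring).
  rewrite cexp_add_iPI. ring.
Qed.

Lemma twice_ccosh (a : C) : (2 * ccosh a = cexp a + cexp (- a))%C.
Proof. unfold ccosh; field. Qed.

Lemma cos_eq_1 (t : R) : cos t = 1 -> exists k : Z, t = 2 * IZR k * PI.
Proof.
  intro H. assert (Hs : sin (t / 2) = 0).
  { pose proof (cos_2a_sin (t / 2)) as E. replace (2 * (t / 2)) with t in E by field.
    nra. }
  destruct (sin_eq_0_0 _ Hs) as [k Hk]. exists k. lra.
Qed.

Lemma cexp_eq_1 (w : C) :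
  cexp w = 1%C -> Re w = 0 /\ exists k : Z, Im w = 2 * IZR k * PI.
Proof.
  destruct w as [r t]; unfold cexp; simpl; intro H.
  injection H as Hc Hs.
  pose proof (exp_pos r : 0 < exp r) as He.
  assert (Hsin : sin t = 0) by nra.
  assert (Hexp : exp r = 1).
  { pose proof (sin2_cos2 t) as S. unfold Rsqr in S. nra. }
  split.
  - apply exp_inv. rewrite exp_0. exact Hexp.
  - apply cos_eq_1. nra.
Qed.

(* 1 - e^{2 pi b zeta} has its zeros on the lattice i Z / b, which misses
   the strip -Re(1/b) < Im zeta < 0. *)
Lemma cexp_2PI_mul_neq_1 (b zeta : C) :
  0 < Re b -> - Re (/ b) < Im zeta < 0 ->
  cexp (2 * RtoC PI * b * zeta) <> 1%C.
Proof.
  intros Hb Hzeta E.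
  pose proof (neq_0_of_Re_pos b Hb) as Hb0.
  destruct (cexp_eq_1 _ E) as [Hre [k Him]].
  assert (Hbz : (b * zeta = Ci * RtoC (IZR k))%C).
  { apply injective_projections; simpl;
      simpl in Hre, Him; pose proof PI_RGT_0; nra. }
  assert (Hk : Im zeta = IZR k * Re (/ b)).
  { replace zeta with (Ci * RtoC (IZR k) * / b)%C.
    - destruct (/ b)%C; simpl; ring.
    - rewrite <- Hbz. field. exact Hb0. }
  pose proof (Re_Cinv_pos b Hb) as Hinv.
  assert (Hlo : -1 < IZR k) by nra.
  assert (Hhi : IZR k < 0) by nra.
  apply lt_IZR in Hlo, Hhi. lia.
Qed.

Lemma fe_factor_sub_c_b (b zeta : C) : b <> 0%C ->
  fe_factor b (zeta - c_b b) = (1 - cexp (2 * RtoC PI * b * zeta))%C.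
Proof.
  intro Hb. unfold fe_factor.
  replace (2 * RtoC PI * b * (zeta - c_b b + Ci * b / 2))%C
    with (2 * RtoC PI * b * zeta - Ci * RtoC PI)%C
    by (unfold c_b; field; exact Hb).
  rewrite cexp_sub_iPI. ring.
Qed.

Lemma fe_factor_add_c_b (b zeta : C) : b <> 0%C ->
  fe_factor b (zeta + c_b b - Ci * b) = (1 - cexp (2 * RtoC PI * b * zeta))%C.
Proof.
  intro Hb. unfold fe_factor.
  replace (2 * RtoC PI * b * (zeta + c_b b - Ci * b + Ci * b / 2))%C
    with (2 * RtoC PI * b * zeta + Ci * RtoC PI)%C
    by (unfold c_b; field; exact Hb).
  rewrite cexp_add_iPI. ring.
Qed.

Lemma Int_part_sub_1 (y : R) : Int_part (y - 1) = (Int_part y - 1)%Z.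
Proof.
  symmetry. apply Int_part_spec. rewrite minus_IZR.
  destruct (base_Int_part y). lra.
Qed.

Lemma Int_part_nonpos_iff (y : R) : (Int_part y <= 0)%Z <-> y < 1.
Proof.
  destruct (base_Int_part y) as [Hle Hgt]. split; intro H.
  - apply IZR_le in H. lra.
  - assert (IZR (Int_part y) < 1) as Hlt by lra.
    apply lt_IZR in Hlt. lia.
Qed.

Lemma shift_index_add_iCb (b w : C) : 0 < Re b ->
  shift_index b (w + Ci * b)%C = (shift_index b w - 1)%Z.
Proof.
  intro Hb. unfold shift_index. rewrite <- Int_part_sub_1. f_equal.
  replace (Im (w + Ci * b)) with (Im w + Re b) by (destruct w, b; simpl; ring).
  field. lra.
Qed.

Lemma shift_index_nonpos_iff (b w : C) : 0 < Re b ->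
  (shift_index b w <= 0)%Z <-> - Im (c_b b) < Im w.
Proof.
  intro Hb. unfold shift_index. rewrite Int_part_nonpos_iff.
  set (q := (- Im (c_b b) - Im w) / Re b).
  assert (Hq : - Im (c_b b) - Im w = q * Re b) by (unfold q; field; lra).
  split; intro; nra.
Qed.

Lemma fe_prod_S (b w : C) (m : nat) :
  fe_prod b w (S m) = (fe_factor b w * fe_prod b (w + Ci * b) m)%C.
Proof.
  induction m as [|m IH].
  - simpl. replace (w + Ci * RtoC 0 * b)%C with w by ring. ring.
  - change (fe_prod b w (S (S m)))
      with (fe_prod b w (S m) * fe_factor b (w + Ci * RtoC (INR (S m)) * b))%C.
    rewrite IH. simpl fe_prod. rewrite <- !Cmult_assoc. do 3 f_equal.
    rewrite S_INR, RtoC_plus. ring.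
Qed.

Lemma phib_nonpos_index (b w : C) : (shift_index b w <= 0)%Z ->
  let n := shift_index b w in
  phib b w = (fe_prod b (w + Ci * IZR n * b) (Z.to_nat (- n))
              * phib_strip b (w + Ci * IZR n * b))%C.
Proof.
  intros Hn n. unfold phib. fold n.
  destruct (Z.eq_dec n 0) as [E|E].
  - rewrite E. simpl. unfold Cdiv.
    replace (Cinv 1) with (RtoC 1) by (apply injective_projections; simpl; field).
    ring.
  - replace (Z.leb 0 n) with false by (symmetry; apply Z.leb_gt; lia).
    reflexivity.
Qed.

Lemma phib_add_iCb (b w : C) : 0 < Re b -> (shift_index b w <= 0)%Z ->
  phib b (w + Ci * b)%C = (fe_factor b w * phib b w)%C.
Proof.
  intros Hb Hn.
  pose proof (shift_index_add_iCb b w Hb) as Hs.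
  rewrite (phib_nonpos_index b w Hn), phib_nonpos_index by lia. cbv zeta.
  rewrite Hs. set (n := shift_index b w) in *.
  replace (w + Ci * b + Ci * IZR (n - 1) * b)%C with (w + Ci * IZR n * b)%C
    by (rewrite minus_IZR, RtoC_minus; ring).
  replace (Z.to_nat (- (n - 1))) with (S (Z.to_nat (- n))) by lia.
  simpl fe_prod.
  replace (w + Ci * IZR n * b + Ci * INR (Z.to_nat (- n)) * b)%C with w
    by (rewrite INR_IZR_INZ, Z2Nat.id, opp_IZR, RtoC_opp by lia; ring).
  ring.
Qed.

(* Stated for 1/phi_b: on the branch n > 0 the continuation divides by
   fe_prod, so the inverse satisfies the functional equation with no
   nonvanishing hypothesis. *)
Lemma Cinv_phib (b w : C) : 0 < Re b ->
  ((shift_index b w <= 0)%Z -> fe_factor b w <> 0%C) ->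
  Cinv (phib b w) = (fe_factor b w * Cinv (phib b (w + Ci * b)%C))%C.
Proof.
  intros Hb Hf. destruct (Z_le_gt_dec (shift_index b w) 0) as [Hn|Hn].
  - rewrite phib_add_iCb, Cinv_mult, Cmult_assoc, Cinv_r by auto. ring.
  - unfold phib. rewrite shift_index_add_iCb by exact Hb.
    set (n := shift_index b w) in *.
    replace (Z.leb 0 n) with true by (symmetry; apply Z.leb_le; lia).
    replace (Z.leb 0 (n - 1)) with true by (symmetry; apply Z.leb_le; lia).
    replace (w + Ci * b + Ci * IZR (n - 1) * b)%C with (w + Ci * IZR n * b)%C
      by (rewrite minus_IZR, RtoC_minus; ring).
    replace (Z.to_nat n) with (S (Z.to_nat (n - 1))) by lia.
    rewrite fe_prod_S. unfold Cdiv. rewrite !Cinv_mult, !Cinv_inv. ring.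
Qed.

Lemma alpha_sub_iCb (b : C) (s : R) (z : C) : 0 < Re b -> Im z < 0 ->
  alpha b s (z - Ci * b) =
  ((1 - cexp (2 * RtoC PI * b * (RtoC s - z)))
   * (1 - cexp (2 * RtoC PI * b * (RtoC s + z)))
   * cexp (- (2 * RtoC PI * b * RtoC s)) * alpha b s z)%C.
Proof.
  intros Hb Hz.
  pose proof (neq_0_of_Re_pos b Hb) as Hb0.
  pose proof (Im_c_b b) as Hc.
  set (u := (RtoC s - z - c_b b)%C).
  set (w := (RtoC s + z + c_b b - Ci * b)%C).
  assert (Hu : (shift_index b u <= 0)%Z).
  { apply shift_index_nonpos_iff; auto.
    assert (Im u = - Im z - Im (c_b b)) as ->
      by (unfold u; generalize (c_b b); intros []; destruct z; simpl; ring).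
    lra. }
  assert (Hw : (shift_index b w <= 0)%Z -> fe_factor b w <> 0%C).
  { intros Hn E. apply shift_index_nonpos_iff in Hn; auto.
    assert (Im w = Im z + Im (c_b b) - Re b) as Hw'
      by (unfold w; generalize (c_b b); intros []; destruct z, b; simpl; ring).
    unfold w in E. rewrite fe_factor_add_c_b in E by exact Hb0.
    apply (cexp_2PI_mul_neq_1 b (RtoC s + z) Hb).
    - replace (Im (RtoC s + z)) with (Im z) by (destruct z; simpl; ring). lra.
    - replace (cexp _) with (1 - (1 - cexp (2 * RtoC PI * b * (RtoC s + z))))%C
        by ring.
      rewrite E. ring. }
  unfold alpha.
  replace (RtoC s - (z - Ci * b) - c_b b)%C with (u + Ci * b)%C by (unfold u; ring).
  replace (RtoC s + (z - Ci * b) + c_b b)%C with w by (unfold w; ring).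
  replace (RtoC s + z + c_b b)%C with (w + Ci * b)%C by (unfold w; ring).
  fold u. unfold Cdiv.
  rewrite phib_add_iCb, Cinv_phib by auto.
  unfold u, w. rewrite fe_factor_sub_c_b, fe_factor_add_c_b by exact Hb0.
  replace (- (2 * RtoC PI * Ci * (z - Ci * b + c_b b) * RtoC s))%C
    with (- (2 * RtoC PI * Ci * (z + c_b b) * RtoC s) + - (2 * RtoC PI * b * RtoC s))%C
    by (symmetry; transitivity (- (2 * RtoC PI * Ci * (z + c_b b) * RtoC s)
                      + 2 * RtoC PI * (Ci * Ci) * b * RtoC s)%C; [ring|];
        rewrite Ci_mult_Ci; ring).
  rewrite cexp_add. ring.
Qed.

Lemma ccosh_factor_identity (a c : C) :
  ((1 - cexp (a - c)) * (1 - cexp (a + c)) * cexp (- a) + 2 * ccosh c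
   = 2 * ccosh a)%C.
Proof.
  rewrite !twice_ccosh. unfold Cminus. rewrite !cexp_add.
  pose proof (cexp_opp_r a) as Ha. pose proof (cexp_opp_r c) as Hc.
  set (P := cexp a) in *. set (P' := cexp (- a)) in *.
  set (Q := cexp c) in *. set (Q' := cexp (- c)) in *.
  transitivity (P' - (P * P') * Q' - (P * P') * Q + P * (P * P') * (Q * Q') + Q + Q')%C;
    [ring|].
  rewrite Ha, Hc. ring.
Qed.

Theorem mainTheorem15 (b : C) (s x eps : R) :
  0 < Re b -> 0 <= Im b -> 0 <= s -> 0 < eps ->
  let z : C := (RtoC x - Ci * RtoC eps)%C in
  (alpha b s (z - Ci * b) + 2 * ccosh (2 * RtoC PI * b * z) * alpha b s z)%C
  = (2 * ccosh (2 * RtoC PI * b * RtoC s) * alpha b s z)%C.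
Proof.
  intros Hb _ _ Heps z.
  assert (Hz : Im z < 0) by (unfold z; simpl; lra).
  rewrite (alpha_sub_iCb b s z Hb Hz).
  rewrite <- (ccosh_factor_identity (2 * RtoC PI * b * RtoC s) (2 * RtoC PI * b * z)).
  replace (2 * RtoC PI * b * (RtoC s - z))%C
    with (2 * RtoC PI * b * RtoC s - 2 * RtoC PI * b * z)%C by ring.
  replace (2 * RtoC PI * b * (RtoC s + z))%C
    with (2 * RtoC PI * b * RtoC s + 2 * RtoC PI * b * z)%C by ring.
  ring.
Qed.
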